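(* Fix a finite tensor order $N<\infty$. For an input tensor $\mathcal{Y}\in\mathbb{R}^{I_1\times\cdots\times I_N}$ let $P=\prod_{k=1}^N I_k$, $I_{(-k)}=\prod_{j\neq k}I_j$, let $r_k$ be the post-threshold rank of mode $k$, and $r_{(-k)}=\prod_{j\neq k}r_j$. Assume that, for each $k=1,\dots,N$, $r_k=\mathcal{O}(I_k^{\alpha_k})$ with $0\le\alpha_k<1$, and set $\alpha_{\max}=\max_k\alpha_k$. Suppose the computational cost of TARST is $$T_{\mathrm{TARST}}=\mathcal{O}\!\Bigg(\sum_{k=1}^{N}\Big[\min\{I_k^2 I_{(-k)},\,I_k I_{(-k)}^2\}+\min\{I_k,\,I_{(-k)}\}+\frac{P\,r_{(-k)}}{I_k}\Big]\Bigg).$$ Then $T_{\mathrm{TARST}}=\mathcal{O}(P^{1+\varepsilon})$ with $\varepsilon=\max\{1/2,\alpha_{\max}\}<1$; in particular TARST runs in polynomial time in the input size $P$, with exponent strictly less than $2$.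
   Context: TARST (Tensor Automatic Rank-free Singular-value Thresholding) is the following non-iterative algorithm on an $N$-way tensor $\mathcal{Y}$: for each mode $k$, form the mode-$k$ unfolding $\mathbf{Y}_{(k)}\in\mathbb{R}^{I_k\times I_{(-k)}}$ (mode-$k$ indices as rows, all other indices flattened into columns), compute its SVD, apply hard thresholding to its singular values with a data-dependent threshold $\tau_{(k)}$ (singular values below $\tau_{(k)}$ are set to zero), and let $r_k$ be the number of retained singular values (the post-threshold rank of mode $k$); then reconstruct a Tucker approximation $\hat{\mathcal{X}}=(\mathcal{Y}\times_1\mathbf{U}_{(1)}^\top\cdots\times_N\mathbf{U}_{(N)}^\top)\times_1\mathbf{U}_{(1)}\cdots\times_N\mathbf{U}_{(N)}$ from the retained left singular vectors $\mathbf{U}_{(k)}$. Under the dense linear algebra model, the three phases cost, per mode $k$: SVD $\mathcal{O}(\min\{I_k^2I_{(-k)},I_kI_{(-k)}^2\})$, thresholding $\mathcal{O}(\min\{I_k,I_{(-k)}\})$, reconstruction $\mathcal{O}(P\,r_{(-k)}/I_k)$; the total cost is the sum over modes. Asymptotic notation $\mathcal{O}(\cdot)$ refers to growth as the mode dimensions (hence $P$) grow, with $N$ fixed. *)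

From HB Require Import structures.
From mathcomp Require Import all_boot all_order all_algebra.
From mathcomp Require Import all_classical all_reals all_analysis.
Set Implicit Arguments. Unset Strict Implicit. Unset Printing Implicit Defensive.
Import Order.TTheory GRing.Theory Num.Theory.
Local Open Scope ring_scope.

(* Tensor of order N with mode dimensions I : 'I_N -> nat. *)

Definition tensor_size {N : nat} (I : 'I_N -> nat) : nat := (\prod_(k < N) I k)%N.

Definition prod_but {N : nat} (I : 'I_N -> nat) (k : 'I_N) : nat :=
  (\prod_(j < N | j != k) I j)%N.

(* The per-mode cost expression of TARST (SVD + thresholding + reconstruction),
   summed over the modes:
   sum_k [ min{I_k^2 I_(-k), I_k I_(-k)^2} + min{I_k, I_(-k)} + P r_(-k) / I_k ] *)
Definition tarst_cost_expr {R : realType} {N : nat} (I r : 'I_N -> nat) : R :=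
  \sum_(k < N)
    ( (minn (I k ^ 2 * prod_but I k) (I k * prod_but I k ^ 2))%:R
    + (minn (I k) (prod_but I k))%:R
    + (tensor_size I)%:R * (prod_but r k)%:R / (I k)%:R ).

(* alpha_max = max_k alpha_k (all alpha_k are >= 0, so 0 is a neutral start) *)
Definition alpha_max {R : realType} {N : nat} (alpha : 'I_N -> R) : R :=
  \big[Num.max/0]_(k < N) alpha k.

From HB Require Import structures.
From mathcomp Require Import all_boot all_order all_algebra.
From mathcomp Require Import all_classical all_reals all_analysis.
From mathcomp Require Import ring lra.
Set Implicit Arguments.
Unset Strict Implicit.
Unset Printing Implicit Defensive.
Import Order.TTheory GRing.Theory Num.Theory.
Local Open Scope classical_set_scope.
Local Open Scope ring_scope.

(* Writing P = I_k I_(-k), the SVD term of mode k is P min{I_k, I_(-k)}, and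
   min{a, b} <= sqrt (a b) <= P^eps because eps >= 1/2; the thresholding term is
   smaller still.  For large inputs r_j <= C I_j^eps for every j, so the
   reconstruction term P r_(-k) / I_k = I_(-k) r_(-k) is at most
   C^N I_(-k)^(1 + eps) <= C^N P^(1 + eps). *)

Section PowerBounds.
Variable R : realType.

Lemma minn_le_powR_mul (a b : nat) (e : R) :
  1 / 2 <= e -> (0 < a * b)%N -> ((minn a b)%:R : R) <= (a * b)%:R `^ e.
Proof.
move=> he ab_gt0.
have min_sqr_le : (minn a b * minn a b <= a * b)%N.
  by apply: leq_mul; [exact: geq_minl | exact: geq_minr].
apply: (@le_trans _ _ (Num.sqrt (a * b)%:R)).
  by rewrite -[X in X <= _]normr_nat -sqrtr_sqr expr2 -natrM ler_sqrt // ler_nat.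
rewrite -powR12_sqrt // -div1r; apply: ler_powR => //.
by rewrite ler1n.
Qed.

Lemma prodr_powR (I : Type) (s : seq I) (P : pred I) (x : I -> R) (e : R) :
  (forall i, P i -> 0 <= x i) ->
  \prod_(i <- s | P i) x i `^ e = (\prod_(i <- s | P i) x i) `^ e.
Proof.
move=> x_ge0.
suff [] : 0 <= \prod_(i <- s | P i) x i /\
    \prod_(i <- s | P i) x i `^ e = (\prod_(i <- s | P i) x i) `^ e by [].
apply: (big_ind2 (fun a b => 0 <= b /\ a = b `^ e)) => [|a1 b1 a2 b2 [? ->] [? ->]|i Pi].
- by rewrite powR1.
- by rewrite mulr_ge0 // powRM.
- by rewrite x_ge0.
Qed.

End PowerBounds.

Section CostBound.
Variables (R : realType) (N : nat) (I r : 'I_N -> nat) (C e : R).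
Hypotheses (C_ge1 : 1 <= C) (e_ge12 : 1 / 2 <= e).
Hypothesis I_gt0 : forall k, (0 < I k)%N.
Hypothesis r_le : forall k, ((r k)%:R : R) <= C * (I k)%:R `^ e.

Let P := tensor_size I.

Lemma tensor_sizeE k : P = (I k * prod_but I k)%N.
Proof. by rewrite /P /tensor_size (bigD1 k). Qed.

Let P_ge1 : (1 : R) <= P%:R.
Proof. by rewrite ler1n /P /tensor_size prodn_gt0. Qed.

Let e_ge0 : 0 <= e. Proof. move: e_ge12; lra. Qed.

Let C_ge0 : 0 <= C. Proof. move: C_ge1; lra. Qed.

Let powR_P : (P%:R : R) `^ (1 + e) = P%:R * P%:R `^ e.
Proof. by rewrite powRD ?powRr1 //; apply/implyP => /eqP; move: e_ge0; lra. Qed.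

Let minn_le_powR k : ((minn (I k) (prod_but I k))%:R : R) <= P%:R `^ e.
Proof.
by rewrite (tensor_sizeE k) minn_le_powR_mul // -tensor_sizeE /P prodn_gt0.
Qed.

Lemma svd_cost_le k :
  ((minn (I k ^ 2 * prod_but I k) (I k * prod_but I k ^ 2))%:R : R)
    <= P%:R `^ (1 + e).
Proof.
have -> : minn (I k ^ 2 * prod_but I k) (I k * prod_but I k ^ 2) =
          (I k * prod_but I k * minn (I k) (prod_but I k))%N.
  by rewrite minnMr; congr minn; rewrite !expnS expn0; ring.
by rewrite natrM -tensor_sizeE powR_P ler_wpM2l.
Qed.

Lemma threshold_cost_le k :
  ((minn (I k) (prod_but I k))%:R : R) <= P%:R `^ (1 + e).
Proof.
apply: le_trans (minn_le_powR k) _.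
by rewrite powR_P ler_peMl // powR_ge0.
Qed.

Lemma prod_but_r_le k :
  ((prod_but r k)%:R : R) <= C ^+ N * (prod_but I k)%:R `^ e.
Proof.
rewrite /prod_but !natr_prod -prodr_powR => [|j _]; last exact: ler0n.
apply: (@le_trans _ _ (\prod_(j < N | j != k) (C * (I j)%:R `^ e))).
  by apply: ler_prod => j _; rewrite ler0n r_le.
rewrite big_split /= ler_wpM2r //; first by apply: prodr_ge0 => j _; exact: powR_ge0.
rewrite -[X in _ <= C ^+ X]card_ord -prodr_const [leRHS](bigD1 k) //= ler_peMl //.
exact: prodr_ge0.
Qed.

Lemma reconstruction_cost_le k :
  (P%:R : R) * (prod_but r k)%:R / (I k)%:R <= C ^+ N * P%:R `^ (1 + e).
Proof.
have -> : (P%:R : R) * (prod_but r k)%:R / (I k)%:R =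
          (prod_but I k)%:R * (prod_but r k)%:R.
  by rewrite (tensor_sizeE k) natrM; field; rewrite pnatr_eq0 -lt0n.
have but_le_P : ((prod_but I k)%:R : R) <= P%:R.
  by rewrite ler_nat (tensor_sizeE k) leq_pmull.
apply: le_trans (ler_wpM2l (ler0n _ _) (prod_but_r_le k)) _.
rewrite mulrCA powR_P ler_wpM2l ?exprn_ge0 //.
by rewrite ler_pM // ge0_ler_powR // nnegrE ler0n.
Qed.

Lemma tarst_cost_le :
  tarst_cost_expr I r <= (N%:R * (2 + C ^+ N)) * P%:R `^ (1 + e).
Proof.
have -> : (N%:R * (2 + C ^+ N)) * P%:R `^ (1 + e) =
    \sum_(k < N) (P%:R `^ (1 + e) + P%:R `^ (1 + e) + C ^+ N * P%:R `^ (1 + e)).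
  by rewrite sumr_const card_ord -mulr_natl; ring.
apply: ler_sum => k _.
by rewrite !lerD ?svd_cost_le ?threshold_cost_le ?reconstruction_cost_le.
Qed.

End CostBound.

Lemma tarst_cost_expr_ge0 (R : realType) (N : nat) (I r : 'I_N -> nat) :
  0 <= (tarst_cost_expr I r : R).
Proof. by apply: sumr_ge0 => k _; rewrite !addr_ge0 // mulr_ge0 // invr_ge0. Qed.

Lemma eqO_uniform (R : realType) (T : Type) (F : filter_on T) (J : finType)
    (f g : J -> T -> R) :
  (forall j, f j =O_F g j) ->
  exists2 C : R, 1 <= C & \forall t \near F, forall j, `|f j t| <= C * `|g j t|.
Proof.
move=> fg; have /fin_all_exists2[c c_gt0 c_near] : forall j, exists2 c : R,
    0 < c & \forall t \near F, `|f j t| <= c * `|g j t| by move=> j; apply/eqO_exP.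
have sum_ge0 (A : pred J) : 0 <= \sum_(j in A) c j.
  by apply: sumr_ge0 => j _; exact: ltW.
exists (1 + \sum_j c j); first by have := sum_ge0 predT; lra.
near=> t => j.
have fgt : forall j, `|f j t| <= c j * `|g j t| by near: t; exact: filter_forall.
apply: le_trans (fgt j) _.
rewrite ler_wpM2r // (bigD1 j) //=.
by have := sum_ge0 (predC1 j); lra.
Unshelve. all: by end_near.
Qed.

Lemma alpha_max_lt1 (R : realType) (N : nat) (alpha : 'I_N -> R) :
  (forall k, alpha k < 1) -> alpha_max alpha < 1.
Proof.
move=> alpha_lt1; apply: (big_ind (fun x => x < 1)) => // x y x_lt1 y_lt1.
by rewrite gt_max x_lt1 y_lt1.
Qed.

Lemma tarst_cost_eqO (R : realType) (N : nat) (T : Type) (F : filter_on T)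
    (I r : T -> 'I_N -> nat) (alpha : 'I_N -> R) (e : R) :
  (forall k, (fun t => ((I t k)%:R : R)) @ F --> +oo) ->
  1 / 2 <= e -> (forall k, alpha k <= e) ->
  (forall k, (fun t => ((r t k)%:R : R)) =O_F (fun t => ((I t k)%:R : R) `^ alpha k)) ->
  (fun t => tarst_cost_expr (I t) (r t) : R) =O_F
    (fun t => ((tensor_size (I t))%:R : R) `^ (1 + e)).
Proof.
move=> I_oo e_ge12 alpha_le r_O.
have [C C_ge1 r_near] := eqO_uniform r_O.
have I_ge1_near : \forall t \near F, forall k, (1 : R) <= (I t k)%:R.
  by apply: filter_forall => k; exact: cvgry_ge.
apply/eqO_exP; exists (N%:R * (2 + C ^+ N) + 1).
  by rewrite ltr_wpDl // mulr_ge0 // addr_ge0 // exprn_ge0 //; lra.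
near=> t.
have I_ge1 : forall k, (1 : R) <= (I t k)%:R by near: t.
have r_le_alpha : forall k, `|((r t k)%:R : R)| <= C * `|(I t k)%:R `^ alpha k|.
  by near: t.
have r_le k : ((r t k)%:R : R) <= C * (I t k)%:R `^ e.
  have := r_le_alpha k; rewrite normr_nat ger0_norm ?powR_ge0 // => r_le.
  by rewrite (le_trans r_le) // ler_wpM2l ?ler_powR //; lra.
rewrite !ger0_norm ?powR_ge0 ?tarst_cost_expr_ge0 //.
have I_gt0 k : (0 < I t k)%N by rewrite -(ler_nat R).
apply: le_trans (tarst_cost_le C_ge1 e_ge12 I_gt0 r_le) _.
by rewrite ler_wpM2r ?powR_ge0 // lerDl.
Unshelve. all: by end_near.
Qed.

Theorem proposition1 (R : realType) (N : nat) (T : Type) (F : filter_on T)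
    (I r : T -> 'I_N -> nat) (alpha : 'I_N -> R) (Tcost : T -> R) :
  (forall k, (fun t => ((I t k)%:R : R)) @ F --> +oo) ->
  (forall k, 0 <= alpha k < 1) ->
  (forall k, (fun t => ((r t k)%:R : R)) =O_F (fun t => ((I t k)%:R : R) `^ alpha k)) ->
  Tcost =O_F (fun t => tarst_cost_expr (I t) (r t) : R) ->
  let eps := Num.max (1 / 2) (alpha_max alpha) in
  Tcost =O_F (fun t => ((tensor_size (I t))%:R : R) `^ (1 + eps)) /\ eps < 1.
Proof.
move=> I_oo alpha_bounds r_O T_O eps.
have alpha_lt1 k : alpha k < 1 by case/andP: (alpha_bounds k).
have eps_ge12 : 1 / 2 <= eps by rewrite le_max lexx.
have alpha_le k : alpha k <= eps by rewrite le_max le_bigmax orbT.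
split; last by rewrite gt_max alpha_max_lt1 // andbT; lra.
exact: eqO_trans T_O (tarst_cost_eqO I_oo eps_ge12 alpha_le r_O).
Qed.
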